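(* A POMDP $\Lambda=(Q,A,\delta,\Omega,O)$ has non-increasing entropy if and only if it is Dirac-preserving.
   Context: A POMDP is $\Lambda=(Q,A,\delta,\Omega,O)$ where $(Q,A,\delta)$ is an MDP ($Q,A$ finite non-empty, $\delta:Q\times A\to\mathcal D(Q)$), $\Omega$ a finite non-empty set of observations and $O:Q\to\Omega$. A belief is $b\in\mathcal D(Q)$; a state $q$ is identified with the Dirac belief on $q$. For $b\in\mathcal D(Q)$, $a\in A$, $o\in\Omega$: $p(b,a,o):=\sum_{q: O(q)=o}\sum_{q'\in Q}b(q')\delta(q',a)(q)$; $\mathrm{Comp}(b,a):=\{o: p(b,a,o)>0\}$; for $o\in\mathrm{Comp}(b,a)$, $\lambda[b,a,o](q):=0$ if $O(q)\ne o$ and $\lambda[b,a,o](q):=\sum_{q'}b(q')\delta(q',a)(q)/p(b,a,o)$ otherwise. $\Lambda$ is Dirac-preserving if for all $q\in Q$, $a\in A$, $o\in\mathrm{Comp}(q,a)$, $|\mathrm{Supp}(\lambda[q,a,o])|=1$. The entropy of $b$ is $H(b):=-\sum_q b(q)\log_2 b(q)$ (with $0\log 0=0$). $\Lambda$ has non-increasing entropy if for all $b\in\mathcal D(Q)$ and $a\in A$: $H(b)\ge\sum_{o\in\mathrm{Comp}(b,a)}p(b,a,o)\,H(\lambda[b,a,o])$. *)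

From mathcomp Require Import all_boot all_order all_algebra.
From mathcomp Require Import all_classical all_reals all_analysis.
Set Implicit Arguments. Unset Strict Implicit. Unset Printing Implicit Defensive.
Import Order.TTheory GRing.Theory Num.Theory.
Local Open Scope ring_scope.

Section POMDP.
Variables (R : realType) (Q A Omega : finType).

Definition is_dist (b : Q -> R) : Prop :=
  (forall q, 0 <= b q) /\ \sum_(q : Q) b q = 1.

Definition dirac (q : Q) : Q -> R := fun x => (x == q)%:R.

Definition pobs (delta : Q -> A -> Q -> R) (O : Q -> Omega)
  (b : Q -> R) (a : A) (o : Omega) : R :=
  \sum_(q : Q | O q == o) \sum_(q' : Q) b q' * delta q' a q.

Definition compat (delta : Q -> A -> Q -> R) (O : Q -> Omega)
  (b : Q -> R) (a : A) (o : Omega) : bool :=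
  0 < pobs delta O b a o.

Definition bupdate (delta : Q -> A -> Q -> R) (O : Q -> Omega)
  (b : Q -> R) (a : A) (o : Omega) : Q -> R :=
  fun q => if O q == o then (\sum_(q' : Q) b q' * delta q' a q) / pobs delta O b a o
           else 0.

Definition dirac_preserving (delta : Q -> A -> Q -> R) (O : Q -> Omega) : Prop :=
  forall (q : Q) (a : A) (o : Omega), compat delta O (dirac q) a o ->
    #|[set q' : Q | bupdate delta O (dirac q) a o q' != 0]| = 1%N.

Definition log2 (x : R) : R := ln x / ln 2.

Definition entropy (b : Q -> R) : R :=
  - \sum_(q : Q) (if b q == 0 then 0 else b q * log2 (b q)).

Definition nonincreasing_entropy (delta : Q -> A -> Q -> R) (O : Q -> Omega) : Prop :=
  forall (b : Q -> R) (a : A), is_dist b ->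
    \sum_(o : Omega | compat delta O b a o)
        pobs delta O b a o * entropy (bupdate delta O b a o)
    <= entropy b.

End POMDP.

(* For a Dirac belief the entropy is 0 while every posterior has nonnegative
   entropy, and a posterior on two or more states has positive entropy: so
   non-increasing entropy forces Dirac preservation.  Conversely, let Y ~ b be
   the current state, X ~ delta Y a the next one and O = O(X).  The expected
   posterior entropy is H(X | O) <= H(X, Y | O).  If the POMDP is
   Dirac-preserving, X is determined by (Y, O), so H(X, Y | O) = H(Y | O),
   and H(Y | O) <= H(Y) by Gibbs' inequality. *)

From Pilot Require Import Defs.
From mathcomp Require Import all_boot all_order all_algebra.
From mathcomp Require Import all_classical all_reals all_analysis.
From mathcomp Require Import ring lra.
Set Implicit Arguments. Unset Strict Implicit. Unset Printing Implicit Defensive.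
Import Order.TTheory GRing.Theory Num.Theory.
Local Open Scope ring_scope.

Lemma sum_fibres (V : nmodType) (I J : finType) (f : I -> J) (F : I -> V) :
  \sum_i F i = \sum_j \sum_(i | f i == j) F i.
Proof. exact: partition_big. Qed.

Section Entropy.
Variables (R : realType) (I : finType).
Implicit Types (b u v : I -> R) (q : I).

Lemma ln_le_subr1 (x : R) : 0 < x -> ln x <= x - 1.
Proof.
by move=> x_gt0; have := @le_ln1Dx R (x - 1); rewrite addrCA subrr addr0; apply; lra.
Qed.

(* Since [ln 0 = 0], no case split is needed for the convention [0 log 0 = 0]. *)
Definition negentropy b : R := \sum_i b i * ln (b i).

Lemma entropyE b : entropy b = - negentropy b / ln 2.
Proof.
rewrite /entropy /negentropy /log2 mulNr mulr_suml; congr (- _).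
by apply: eq_bigr => i _; case: eqP => [->|_]; rewrite ?mul0r // mulrA.
Qed.

Lemma dist_le1 b i : is_dist b -> b i <= 1.
Proof. by case=> b_ge0 <-; rewrite (bigD1 i) //= lerDl sumr_ge0. Qed.

Lemma negentropy_le0 b : is_dist b -> negentropy b <= 0.
Proof.
move=> b_dist; apply: sumr_le0 => i _.
by rewrite mulr_ge0_le0 ?ln_le0 ?(dist_le1 i b_dist) //; case: b_dist.
Qed.

Lemma entropy_ge0 b : is_dist b -> 0 <= entropy b.
Proof.
move=> /negentropy_le0 N_le0.
by rewrite entropyE mulNr oppr_ge0 mulr_le0_ge0 // invr_ge0 ln_ge0 // ler1n.
Qed.

Lemma entropy_gt0 b : is_dist b -> #|[set i | b i != 0]| != 1%N -> 0 < entropy b.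
Proof.
move=> b_dist supp_neq1; have [b_ge0 b_sum1] := b_dist.
have : (1 < #|[set i | b i != 0%R]|)%N.
  rewrite ltn_neqAle eq_sym supp_neq1 card_gt0; apply/set0Pn.
  apply/existsP; apply: contraT => /existsPn supp0; move: b_sum1.
  rewrite big1 => [/eqP|i _]; first by rewrite eq_sym oner_eq0.
  by apply/eqP; move: (supp0 i); rewrite inE negbK.
case/card_gt1P => x [y [+ + x_neq_y]]; rewrite !inE => bx_neq0 by_neq0.
have bx_gt0 : 0 < b x by rewrite lt0r bx_neq0 b_ge0.
have bx_lt1 : b x < 1.
  have by_gt0 : 0 < b y by rewrite lt0r by_neq0 b_ge0.
  suff : b x + b y <= 1 by lra.
  rewrite -b_sum1 (bigD1 x) //= (bigD1 y) 1?eq_sym //= addrA lerDl.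
  by apply: sumr_ge0.
have : negentropy b < 0.
  have bx_term_lt0 : b x * ln (b x) < 0 by rewrite pmulr_rlt0 // ln_lt0 ?bx_gt0.
  have rest_le0 : \sum_(i | i != x) b i * ln (b i) <= 0.
    by apply: sumr_le0 => i _; rewrite mulr_ge0_le0 ?ln_le0 ?(dist_le1 i b_dist).
  rewrite /negentropy (bigD1 x) //=; lra.
by rewrite entropyE mulNr oppr_gt0 => ?; rewrite pmulr_llt0 // invr_gt0 ln_gt0 // ltr1n.
Qed.

Lemma gibbs_ineq u v :
  (forall i, 0 <= u i) -> (forall i, 0 <= v i) -> (forall i, 0 < u i -> 0 < v i) ->
  \sum_i v i <= \sum_i u i -> 0 <= \sum_i u i * ln (u i / v i).
Proof.
move=> u_ge0 v_ge0 uv_pos sum_le; apply: (@le_trans _ _ (\sum_i (u i - v i))).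
  by rewrite sumrB subr_ge0.
apply: ler_sum => i _; have [->|ui_neq0] := eqVneq (u i) 0.
  by rewrite mul0r sub0r oppr_le0.
have ui_gt0 : 0 < u i by rewrite lt0r ui_neq0 u_ge0.
have vi_gt0 := uv_pos i ui_gt0.
rewrite -invf_div lnV ?posrE ?divr_gt0 // mulrN lerNr opprB.
move/(ler_wpM2l (ltW ui_gt0)): (ln_le_subr1 (divr_gt0 vi_gt0 ui_gt0)).
by rewrite mulrBr mulrCA divff ?gt_eqF // !mulr1.
Qed.

Lemma ler_mul_ln_div (w m c : R) :
  0 <= w <= m -> (0 < w -> 0 < c) -> w * ln (w / c) <= w * ln (m / c).
Proof.
case/andP=> w_ge0 w_le_m c_pos; have [->|w_neq0] := eqVneq w 0; first by rewrite !mul0r.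
have w_gt0 : 0 < w by rewrite lt0r w_neq0.
have c_gt0 := c_pos w_gt0.
have m_gt0 := lt_le_trans w_gt0 w_le_m.
by rewrite ler_wpM2l // ler_ln ?posrE ?divr_gt0 // ler_pM2r ?invr_gt0.
Qed.

Lemma dirac_dist q : is_dist (Defs.dirac R q).
Proof.
split=> [i|]; first by rewrite /Defs.dirac ler0n.
by rewrite (bigD1 q) //= big1 => [|i /negbTE i_neq_q]; rewrite /Defs.dirac ?eqxx ?addr0 ?i_neq_q.
Qed.

Lemma entropy_dirac q : entropy (Defs.dirac R q) = 0.
Proof.
rewrite /entropy big1 ?oppr0 // => i _; rewrite /Defs.dirac.
by case: (i == q); rewrite ?eqxx // oner_eq0 /log2 ln1 mul0r mulr0.
Qed.

End Entropy.

Section BeliefUpdate.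
Variables (R : realType) (Q A Omega : finType).
Variables (delta : Q -> A -> Q -> R) (O : Q -> Omega).
Hypothesis delta_dist : forall q a, is_dist (delta q a).
Implicit Types (b : Q -> R) (q x y : Q) (a : A) (o : Omega).

Local Notation pobs := (pobs delta O).
Local Notation compat := (compat delta O).
Local Notation bupdate := (bupdate delta O).

Definition bnext b a x : R := \sum_y b y * delta y a x.

Lemma delta_ge0 q a x : 0 <= delta q a x.
Proof. by case: (delta_dist q a). Qed.

Lemma bnext_ge0 b a x : (forall q, 0 <= b q) -> 0 <= bnext b a x.
Proof. by move=> b_ge0; apply: sumr_ge0 => y _; rewrite mulr_ge0 ?delta_ge0. Qed.

Lemma pobs_ge0 b a o : (forall q, 0 <= b q) -> 0 <= pobs b a o.
Proof. by move=> b_ge0; apply: sumr_ge0 => x _; apply: bnext_ge0. Qed.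

Lemma bnext_le_pobs b a x : (forall q, 0 <= b q) -> bnext b a x <= pobs b a (O x).
Proof.
by move=> b_ge0; rewrite /pobs (bigD1 x) //= lerDl sumr_ge0 // => ? _; apply: bnext_ge0.
Qed.

Lemma sum_pobs b a : is_dist b -> \sum_o pobs b a o = 1.
Proof.
case=> _ b_sum1; rewrite /pobs -sum_fibres exchange_big /= -b_sum1.
by apply: eq_bigr => y _; rewrite -mulr_sumr; case: (delta_dist y a) => _ ->; rewrite mulr1.
Qed.

Lemma pobs_eq0 b a o : (forall q, 0 <= b q) -> ~~ compat b a o -> pobs b a o = 0.
Proof. by move=> b_ge0; rewrite /Defs.compat lt_neqAle pobs_ge0 // andbT negbK => /eqP. Qed.

Lemma bupdate_dist b a o : (forall q, 0 <= b q) -> compat b a o -> is_dist (bupdate b a o).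
Proof.
move=> b_ge0 p_gt0; split=> [x|]; rewrite /Defs.bupdate.
  by case: ifP => // _; apply: divr_ge0; [exact: bnext_ge0 | exact: ltW].
by rewrite -big_mkcond /= -mulr_suml divff ?gt_eqF.
Qed.

Lemma pobs_mul_bupdate b a o x : (forall q, 0 <= b q) ->
  pobs b a o * bupdate b a o x = if O x == o then bnext b a x else 0.
Proof.
move=> b_ge0; rewrite /Defs.bupdate; case: eqP => [<-|_]; last by rewrite mulr0.
have [p0|p_neq0] := eqVneq (pobs b a (O x)) 0; last by rewrite mulrCA divff ?mulr1.
by apply/esym/eqP; rewrite p0 mul0r eq_le bnext_ge0 // -p0 andbT bnext_le_pobs.
Qed.

Lemma bnext_dirac q a x : bnext (Defs.dirac R q) a x = delta q a x.
Proof.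
rewrite /bnext (bigD1 q) //= big1 => [|y /negbTE y_neq_q].
  by rewrite /Defs.dirac eqxx mul1r addr0.
by rewrite /Defs.dirac y_neq_q mul0r.
Qed.

Lemma pobs_dirac q a o : pobs (Defs.dirac R q) a o = \sum_(x | O x == o) delta q a x.
Proof. by apply: eq_bigr => x _; apply: bnext_dirac. Qed.

Lemma bupdate_dirac q a o x : bupdate (Defs.dirac R q) a o x =
  if O x == o then delta q a x / \sum_(x' | O x' == o) delta q a x' else 0.
Proof. by rewrite /Defs.bupdate -/(bnext _ a x) bnext_dirac pobs_dirac. Qed.

Lemma nonincreasing_entropy_dirac_preserving :
  nonincreasing_entropy delta O -> dirac_preserving delta O.
Proof.
move=> ent_noninc q a o p_gt0; have [dirac_ge0 _] := dirac_dist R q.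
apply/eqP/negPn/negP => supp_neq1.
have post_gt0 := entropy_gt0 (bupdate_dist dirac_ge0 p_gt0) supp_neq1.
have term_gt0 := mulr_gt0 p_gt0 post_gt0.
have rest_ge0 : 0 <= \sum_(o' | compat (Defs.dirac R q) a o' && (o' != o))
    pobs (Defs.dirac R q) a o' * entropy (bupdate (Defs.dirac R q) a o').
  apply: sumr_ge0 => o' /andP[p'_gt0 _].
  by rewrite mulr_ge0 ?(ltW p'_gt0) ?(entropy_ge0 (bupdate_dist dirac_ge0 p'_gt0)).
have := ent_noninc _ a (dirac_dist R q).
by rewrite entropy_dirac (bigD1 o) //=; lra.
Qed.

Lemma dirac_preserving_concentrated q a x :
  dirac_preserving delta O -> delta q a x != 0 ->
  delta q a x = \sum_(x' | O x' == O x) delta q a x'.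
Proof.
move=> dirac_pres dx_neq0; set D := \sum_(x' | _) _.
have D_gt0 : 0 < D.
  rewrite /D (bigD1 x) //= ltr_pwDl ?sumr_ge0 // => [|x' _]; last exact: delta_ge0.
  by rewrite lt0r dx_neq0 delta_ge0.
pose supp := [set x' | bupdate (Defs.dirac R q) a (O x) x' != 0].
have in_supp x' : O x' == O x -> delta q a x' != 0 -> x' \in supp.
  move=> Ox' dx'_neq0; rewrite inE bupdate_dirac Ox'.
  by rewrite mulf_neq0 // invr_neq0 // -/D gt_eqF.
have /cards1P[z supp_eq] : #|supp| == 1%N.
  by apply/eqP/dirac_pres; rewrite /Defs.compat pobs_dirac.
have x_eq_z : x = z by apply/set1P; rewrite -supp_eq in_supp.
rewrite /D (bigD1 x) //= big1 ?addr0 // => x' /andP[Ox' x'_neq_x].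
apply/eqP; apply: contraNT x'_neq_x => dx'_neq0.
by move: (in_supp x' Ox' dx'_neq0); rewrite supp_eq inE x_eq_z.
Qed.

Section ExpectedPosterior.
Variables (b : Q -> R) (a : A).
Hypothesis b_dist : is_dist b.

Let b_ge0 : forall q, 0 <= b q. Proof. by case: b_dist. Qed.

Lemma sum_pobs_negentropy_bupdate :
  \sum_o pobs b a o * negentropy (bupdate b a o) =
  \sum_x bnext b a x * ln (bnext b a x / pobs b a (O x)).
Proof.
under eq_bigr => o _ do rewrite /negentropy mulr_sumr.
rewrite exchange_big; apply: eq_bigr => x _.
rewrite (bigD1 (O x)) //= big1 ?addr0 => [|o o_neq_Ox].
  by rewrite mulrA pobs_mul_bupdate // eqxx /Defs.bupdate eqxx.
by rewrite mulrA pobs_mul_bupdate // eq_sym (negbTE o_neq_Ox) mul0r.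
Qed.

Lemma joint_le_bnext y x : b y * delta y a x <= bnext b a x.
Proof.
by rewrite /bnext (bigD1 y) //= lerDl sumr_ge0 // => y' _; rewrite mulr_ge0 ?delta_ge0.
Qed.

Lemma joint_le_pobs y x : b y * delta y a x <= pobs b a (O x).
Proof. exact: le_trans (joint_le_bnext y x) (bnext_le_pobs _ _ b_ge0). Qed.

Lemma sum_joint_le_sum_bnext :
  \sum_x \sum_y b y * delta y a x * ln (b y * delta y a x / pobs b a (O x)) <=
  \sum_x bnext b a x * ln (bnext b a x / pobs b a (O x)).
Proof.
apply: ler_sum => x _; rewrite [X in _ <= X * _]/bnext mulr_suml.
apply: ler_sum => y _; apply: ler_mul_ln_div => [|w_gt0].
  by rewrite joint_le_bnext mulr_ge0 ?delta_ge0.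
exact: lt_le_trans w_gt0 (joint_le_pobs y x).
Qed.

Lemma mul_kernel_le_pobs y o : b y * \sum_(x | O x == o) delta y a x <= pobs b a o.
Proof. by rewrite mulr_sumr; apply: ler_sum => x _; apply: joint_le_bnext. Qed.

Hypothesis dirac_pres : dirac_preserving delta O.

(* Dirac preservation collapses each observation class to one state, turning the
   sum into the divergence of the observation law of [delta y a] from [pobs b a]. *)
Lemma kernel_divergence_ge0 y : 0 < b y ->
  0 <= \sum_x delta y a x * ln (delta y a x / pobs b a (O x)).
Proof.
move=> by_gt0.
have -> : \sum_x delta y a x * ln (delta y a x / pobs b a (O x)) =
    \sum_o (\sum_(x | O x == o) delta y a x) *
            ln ((\sum_(x | O x == o) delta y a x) / pobs b a o).
  rewrite (sum_fibres O); apply: eq_bigr => o _; rewrite mulr_suml.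
  apply: eq_bigr => x /eqP <-; have [->|dx_neq0] := eqVneq (delta y a x) 0.
    by rewrite !mul0r.
  by rewrite -(dirac_preserving_concentrated dirac_pres dx_neq0).
apply: gibbs_ineq.
- by move=> o; apply: sumr_ge0 => x _; apply: delta_ge0.
- by move=> o; apply: pobs_ge0.
- by move=> o D_gt0; apply: lt_le_trans (mulr_gt0 by_gt0 D_gt0) (mul_kernel_le_pobs y o).
- by rewrite sum_pobs // -sum_fibres; case: (delta_dist y a) => _ ->.
Qed.

Lemma negentropy_le_sum_joint :
  negentropy b <= \sum_x \sum_y b y * delta y a x * ln (b y * delta y a x / pobs b a (O x)).
Proof.
rewrite /negentropy exchange_big; apply: ler_sum => y _.
have [->|by_neq0] := eqVneq (b y) 0.
  by rewrite mul0r big1 // => x _; rewrite !mul0r.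
have by_gt0 : 0 < b y by rewrite lt0r by_neq0 b_ge0.
have -> : \sum_x b y * delta y a x * ln (b y * delta y a x / pobs b a (O x)) =
    b y * ln (b y) + b y * \sum_x delta y a x * ln (delta y a x / pobs b a (O x)).
  case: (delta_dist y a) => _ d_sum1.
  rewrite -[b y * ln (b y)]mulr1 -d_sum1 !mulr_sumr -big_split /=; apply: eq_bigr => x _.
  have [->|dx_neq0] := eqVneq (delta y a x) 0; first by rewrite !(mulr0, mul0r) addr0.
  have dx_gt0 : 0 < delta y a x by rewrite lt0r dx_neq0 delta_ge0.
  have p_gt0 := lt_le_trans (mulr_gt0 by_gt0 dx_gt0) (joint_le_pobs y x).
  rewrite -[b y * delta y a x / _]mulrA lnM ?posrE ?divr_gt0 //; ring.
by rewrite lerDl mulr_ge0 ?(ltW by_gt0) ?kernel_divergence_ge0.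
Qed.

Lemma negentropy_le_expected_posterior :
  negentropy b <= \sum_o pobs b a o * negentropy (bupdate b a o).
Proof.
rewrite sum_pobs_negentropy_bupdate.
exact: le_trans negentropy_le_sum_joint sum_joint_le_sum_bnext.
Qed.

End ExpectedPosterior.

Lemma dirac_preserving_nonincreasing_entropy :
  dirac_preserving delta O -> nonincreasing_entropy delta O.
Proof.
move=> dirac_pres b a b_dist; have [b_ge0 _] := b_dist.
have -> : \sum_(o | compat b a o) pobs b a o * entropy (bupdate b a o) =
    - (\sum_o pobs b a o * negentropy (bupdate b a o)) / ln 2.
  rewrite big_mkcond mulNr mulr_suml -sumrN; apply: eq_bigr => o _.
  case: ifPn => [_|ncomp]; first by rewrite entropyE mulNr mulrN mulrA.
  by rewrite pobs_eq0 // !mul0r oppr0.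
rewrite entropyE ler_pM2r ?invr_gt0 ?ln_gt0 ?ltr1n // lerN2.
exact: negentropy_le_expected_posterior.
Qed.

End BeliefUpdate.

Theorem mainTheorem10 (R : realType) (Q A Omega : finType)
  (delta : Q -> A -> Q -> R) (O : Q -> Omega) :
  (0 < #|Q|)%N -> (0 < #|A|)%N -> (0 < #|Omega|)%N ->
  (forall (q : Q) (a : A), is_dist (delta q a)) ->
  (nonincreasing_entropy delta O <-> dirac_preserving delta O).
Proof.
move=> _ _ _ delta_dist; split.
  exact: nonincreasing_entropy_dirac_preserving.
exact: dirac_preserving_nonincreasing_entropy.
Qed.
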